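(* Let $\mathbb{T}$ be a time scale and $a,b\in\mathbb{T}$ with $a<b$. If $f:[a,b]^\kappa_{\mathbb{T}}\to\mathbb{R}$ is rd-continuous and positive, then $$\int_a^b f(t)\ln(f(t))\Delta t\geq\left(\int_a^b f(t)\Delta t\right)\ln\left(\frac{1}{b-a}\int_a^b f(t)\Delta t\right),$$ and equality holds if and only if $f$ is constant.
   Context: A time scale $\mathbb{T}$ is a nonempty closed subset of $\mathbb{R}$. $[a,b]_{\mathbb{T}}=[a,b]\cap\mathbb{T}$; $[a,b]^\kappa_{\mathbb{T}}$ equals $[a,b]_{\mathbb{T}}$ with $b$ removed if $b$ is left-scattered, and $[a,b]_{\mathbb{T}}$ otherwise. A function is rd-continuous if it is continuous at right-dense points and has finite left-sided limits at left-dense points. $\int_a^b\cdot\,\Delta t$ denotes the delta integral on $\mathbb{T}$. *)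

From Stdlib Require Import Reals ClassicalEpsilon.
From Coquelicot Require Import Coquelicot.
Open Scope R_scope.

Definition time_scale (T : R -> Prop) : Prop :=
  (exists x, T x) /\
  (forall x, (forall eps, 0 < eps -> exists y, T y /\ Rabs (y - x) < eps) -> T x).

(* forward jump operator: sigma t = inf {s in T | s > t}, sigma (max T) = max T *)
Definition sigma (T : R -> Prop) (t : R) : R :=
  match Glb_Rbar (fun s => T s /\ t < s) with
  | Finite x => x
  | _ => t
  end.

(* backward jump operator: rho t = sup {s in T | s < t}, rho (min T) = min T *)
Definition rho (T : R -> Prop) (t : R) : R :=
  match Lub_Rbar (fun s => T s /\ s < t) with
  | Finite x => x
  | _ => t
  end.

Definition right_dense T t := sigma T t = t.
Definition left_dense T t := rho T t = t.

Definition interval_ts (T : R -> Prop) (a b : R) : R -> Prop :=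
  fun t => T t /\ a <= t <= b.

Definition kappa (T : R -> Prop) : R -> Prop :=
  fun t => T t /\ ~ ((forall s, T s -> s <= t) /\ ~ left_dense T t).

Definition rd_continuous (T : R -> Prop) (f : R -> R) : Prop :=
  forall t, kappa T t ->
    (right_dense T t ->
       forall eps, 0 < eps -> exists delta, 0 < delta /\
         forall s, kappa T s -> Rabs (s - t) < delta -> Rabs (f s - f t) < eps) /\
    (left_dense T t ->
       exists L, forall eps, 0 < eps -> exists delta, 0 < delta /\
         forall s, kappa T s -> t - delta < s < t -> Rabs (f s - L) < eps).

Definition has_delta_deriv (T : R -> Prop) (F : R -> R) (t c : R) : Prop :=
  forall eps, 0 < eps -> exists delta, 0 < delta /\
    forall s, T s -> Rabs (s - t) < delta ->
      Rabs (F (sigma T t) - F s - c * (sigma T t - s)) <= eps * Rabs (sigma T t - s).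

Definition is_delta_antideriv (T : R -> Prop) (f F : R -> R) : Prop :=
  forall t, kappa T t -> has_delta_deriv T F t (f t).

Definition delta_integral (T : R -> Prop) (f : R -> R) (a b : R) : R :=
  let F := epsilon (inhabits (fun _ : R => 0)) (is_delta_antideriv T f) in
  F b - F a.

From Pilot Require Import Defs.
From Stdlib Require Import Reals Lra ClassicalEpsilon Classical.
From Coquelicot Require Import Coquelicot.
Open Scope R_scope.

(* With m the mean value of f on [a,b], the tangent line of x ln x at m gives
   f ln f - (ln m + 1) f + m >= 0 pointwise, with equality exactly where f = m.  A function
   with nonnegative delta derivative is nondecreasing (by the induction principle for time
   scales), and it is constant only if the derivative vanishes; applied to an antiderivative
   of the left-hand side this yields the inequality and its equality case.  The delta
   integral is defined through an antiderivative, which exists for rd-continuous f: extend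
   f to a continuous function on [a,b] whose mean over each gap (t, sigma t) is f t, and
   take its Riemann integral. *)

Lemma Glb_Rbar_finite (E : R -> Prop) (m : R) :
  (exists y, E y) -> (forall y, E y -> m <= y) ->
  exists c, Glb_Rbar E = Finite c /\ (forall y, E y -> c <= y) /\
    (forall e, 0 < e -> exists y, E y /\ y < c + e) /\ m <= c.
Proof.
  intros [y0 Ey0] Hm. destruct (Glb_Rbar_correct E) as [Hlb Hglb].
  assert (Hm' : Rbar_le m (Glb_Rbar E)) by (apply Hglb; intros x Ex; simpl; auto).
  assert (Hy0 : Rbar_le (Glb_Rbar E) y0) by (apply Hlb; auto).
  destruct (Glb_Rbar E) as [c| |]; simpl in Hm', Hy0; try contradiction.
  exists c; split; [reflexivity|split; [|split; [|exact Hm']]].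
  - intros y Ey. exact (Hlb y Ey).
  - intros e He. apply NNPP; intro Hn.
    assert (Hce : is_lb_Rbar E (c + e)).
    { intros x Ex. simpl. apply Rnot_lt_le. intro Hx. apply Hn. eauto. }
    specialize (Hglb _ Hce). simpl in Hglb. lra.
Qed.

Lemma Glb_Rbar_empty (E : R -> Prop) : (forall y, ~ E y) -> Glb_Rbar E = p_infty.
Proof.
  intros He. destruct (Glb_Rbar_correct E) as [_ Hglb].
  assert (H : Rbar_le p_infty (Glb_Rbar E)) by (apply Hglb; intros x Ex; exfalso; eapply He; eauto).
  destruct (Glb_Rbar E); simpl in H; tauto.
Qed.

Lemma Lub_Rbar_finite (E : R -> Prop) (m : R) :
  (exists y, E y) -> (forall y, E y -> y <= m) ->
  exists c, Lub_Rbar E = Finite c /\ (forall y, E y -> y <= c) /\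
    (forall e, 0 < e -> exists y, E y /\ c - e < y) /\ c <= m.
Proof.
  intros [y0 Ey0] Hm. destruct (Lub_Rbar_correct E) as [Hub Hlub].
  assert (Hm' : Rbar_le (Lub_Rbar E) m) by (apply Hlub; intros x Ex; simpl; auto).
  assert (Hy0 : Rbar_le y0 (Lub_Rbar E)) by (apply Hub; auto).
  destruct (Lub_Rbar E) as [c| |]; simpl in Hm', Hy0; try contradiction.
  exists c; split; [reflexivity|split; [|split; [|exact Hm']]].
  - intros y Ey. exact (Hub y Ey).
  - intros e He. apply NNPP; intro Hn.
    assert (Hce : is_ub_Rbar E (c - e)).
    { intros x Ex. simpl. apply Rnot_lt_le. intro Hx. apply Hn. eauto. }
    specialize (Hlub _ Hce). simpl in Hlub. lra.
Qed.

Lemma Lub_Rbar_empty (E : R -> Prop) : (forall y, ~ E y) -> Lub_Rbar E = m_infty.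
Proof.
  intros He. destruct (Lub_Rbar_correct E) as [_ Hlub].
  assert (H : Rbar_le (Lub_Rbar E) m_infty) by (apply Hlub; intros x Ex; exfalso; eapply He; eauto).
  destruct (Lub_Rbar E); simpl in H; tauto.
Qed.

Definition right_cont_at (g : R -> R) z := forall e, 0 < e ->
  exists d, 0 < d /\ forall x, z <= x < z + d -> Rabs (g x - g z) <= e.
Definition left_cont_at (g : R -> R) z := forall e, 0 < e ->
  exists d, 0 < d /\ forall x, z - d < x <= z -> Rabs (g x - g z) <= e.

Lemma continuity_pt_bound g z : continuity_pt g z -> forall e, 0 < e ->
  exists d, 0 < d /\ forall x, Rabs (x - z) < d -> Rabs (g x - g z) <= e.
Proof.
  intros Hg e He. destruct (Hg e He) as [d [Hd Hnear]]. exists d. split; [lra|].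
  intros x Hx. destruct (Req_dec x z) as [->|Hxz]; [rewrite Rminus_diag, Rabs_R0; lra|].
  apply Rlt_le, (Hnear x). repeat split; auto.
Qed.

Lemma continuity_pt_left_right g z : left_cont_at g z -> right_cont_at g z -> continuity_pt g z.
Proof.
  intros HL HR e He. destruct (HL (e / 2)) as [d1 [Hd1 K1]]; [lra|].
  destruct (HR (e / 2)) as [d2 [Hd2 K2]]; [lra|].
  exists (Rmin d1 d2). split; [apply Rmin_pos; auto|].
  intros x [_ Hx]. simpl in *. unfold R_dist in *.
  assert (Rmin d1 d2 <= d1) by apply Rmin_l. assert (Rmin d1 d2 <= d2) by apply Rmin_r.
  apply Rabs_lt_between in Hx. destruct (Rle_dec z x).
  - assert (Rabs (g x - g z) <= e / 2) by (apply K2; lra). lra.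
  - assert (Rabs (g x - g z) <= e / 2) by (apply K1; lra). lra.
Qed.

Lemma right_cont_at_local g p z d : 0 < d -> (forall x, z <= x < z + d -> g x = p x) ->
  continuity_pt p z -> right_cont_at g z.
Proof.
  intros Hd Heq Hp e He. destruct (continuity_pt_bound p z Hp e He) as [d1 [Hd1 Hnear]].
  exists (Rmin d d1). split; [apply Rmin_pos; auto|]. intros x Hx.
  assert (Rmin d d1 <= d) by apply Rmin_l. assert (Rmin d d1 <= d1) by apply Rmin_r.
  rewrite (Heq x), (Heq z) by lra. apply Hnear. rewrite Rabs_right; lra.
Qed.

Lemma left_cont_at_local g p z d : 0 < d -> (forall x, z - d < x <= z -> g x = p x) ->
  continuity_pt p z -> left_cont_at g z.
Proof.
  intros Hd Heq Hp e He. destruct (continuity_pt_bound p z Hp e He) as [d1 [Hd1 Hnear]].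
  exists (Rmin d d1). split; [apply Rmin_pos; auto|]. intros x Hx.
  assert (Rmin d d1 <= d) by apply Rmin_l. assert (Rmin d d1 <= d1) by apply Rmin_r.
  rewrite (Heq x), (Heq z) by lra. apply Hnear. rewrite Rabs_left1; lra.
Qed.

Lemma RInt_close_to_const_le (g : R -> R) p q c e : p <= q -> ex_RInt g p q ->
  (forall x, p <= x <= q -> Rabs (g x - c) <= e) -> Rabs (RInt g p q - c * (q - p)) <= e * (q - p).
Proof.
  intros Hpq Hg Hclose.
  assert (Hc : ex_RInt (fun _ => c) p q) by apply ex_RInt_const.
  assert (E : RInt (fun x => g x - c) p q = RInt g p q - (q - p) * c).
  { exact (eq_trans (RInt_minus g (fun _ => c) p q Hg Hc) (f_equal _ (RInt_const p q c))). }
  replace (RInt g p q - c * (q - p)) with (RInt (fun x => g x - c) p q)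
    by (rewrite E, (Rmult_comm c); reflexivity).
  rewrite Rmult_comm. apply abs_RInt_le_const; auto. exact (ex_RInt_minus _ _ p q Hg Hc).
Qed.

Lemma RInt_close_to_const (g : R -> R) p q c e : ex_RInt g p q ->
  (forall x, Rmin p q <= x <= Rmax p q -> Rabs (g x - c) <= e) ->
  Rabs (RInt g p q - c * (q - p)) <= e * Rabs (q - p).
Proof.
  intros Hg Hclose. destruct (Rle_dec p q) as [Hpq|Hqp].
  - rewrite Rmin_left, Rmax_right in Hclose by lra. rewrite (Rabs_right (q - p)) by lra.
    apply RInt_close_to_const_le; auto.
  - rewrite Rmin_right, Rmax_left in Hclose by lra. rewrite (Rabs_left (q - p)) by lra.
    rewrite <- (opp_RInt_swap g q p) by (apply ex_RInt_swap; auto).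
    replace (opp (RInt g q p) - c * (q - p)) with (- (RInt g q p - c * (p - q)))
      by (unfold opp; simpl; ring).
    rewrite Rabs_Ropp. replace (e * - (q - p)) with (e * (p - q)) by ring.
    apply RInt_close_to_const_le; [lra | apply ex_RInt_swap; auto | auto].
Qed.

(* On a gap (u, w) of a time scale the integrand is extended by a continuous function
   with endpoint values A, B and mean value m: linear interpolation plus a multiple of the
   bump th (1 - th), whose mean is 1/6. *)
Definition gap_interp (u w A B m x : R) : R :=
  let th := (x - u) / (w - u) in A + (B - A) * th + 6 * (m - (A + B) / 2) * th * (1 - th).

Lemma gap_interp_left u w A B m : u < w -> gap_interp u w A B m u = A.
Proof. intros Huw. unfold gap_interp. cbv zeta. unfold Rdiv. rewrite Rminus_diag. ring. Qed.

Lemma gap_interp_right u w A B m : u < w -> gap_interp u w A B m w = B.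
Proof. intros Huw. unfold gap_interp. cbv zeta. rewrite Rdiv_diag by lra. ring. Qed.

Lemma gap_interp_continuous u w A B m x : u < w -> continuity_pt (gap_interp u w A B m) x.
Proof.
  intros Huw. apply continuity_pt_filterlim, (@ex_derive_continuous R_AbsRing R_NormedModule).
  unfold gap_interp. cbv zeta. auto_derive. lra.
Qed.

Lemma gap_interp_bound u w A B m c e x : u < w -> u <= x <= w ->
  Rabs (A - c) <= e -> Rabs (B - c) <= e -> Rabs (m - c) <= e ->
  Rabs (gap_interp u w A B m x - c) <= 4 * e.
Proof.
  intros Huw Hx HA HB Hm. unfold gap_interp. cbv zeta. set (th := (x - u) / (w - u)).
  assert (Hth : 0 <= th <= 1).
  { unfold th. split; [apply Rdiv_le_0_compat; lra|].
    apply Rmult_le_reg_r with (w - u); [lra|]. unfold Rdiv. rewrite Rmult_assoc, Rinv_l; lra. }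
  replace (A + (B - A) * th + 6 * (m - (A + B) / 2) * th * (1 - th) - c) with
    ((1 - th) * (A - c) + th * (B - c) + 6 * (th * (1 - th)) * ((m - c) - ((A - c) + (B - c)) / 2))
    by field.
  assert (Hbump : 0 <= th * (1 - th) <= 1 / 4).
  { split; [apply Rmult_le_pos; lra|]. generalize (Rle_0_sqr (th - 1 / 2)). unfold Rsqr. nra. }
  assert (Hdev : Rabs ((m - c) - ((A - c) + (B - c)) / 2) <= 2 * e).
  { apply Rabs_le_between in HA, HB, Hm. apply Rabs_le; lra. }
  apply Rabs_le_between in HA, HB, Hm, Hdev.
  set (al := A - c) in *. set (be := B - c) in *. set (dv := (m - c) - (al + be) / 2) in *.
  apply Rabs_le; split; nra.
Qed.

Lemma gap_interp_integral u w A B m : u < w -> RInt (gap_interp u w A B m) u w = m * (w - u).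
Proof.
  intros Huw.
  set (P x := let th := (x - u) / (w - u) in
    (w - u) * (A * th + (B - A) * th ^ 2 / 2 + (m - (A + B) / 2) * (3 * th ^ 2 - 2 * th ^ 3))).
  assert (HP : is_RInt (gap_interp u w A B m) u w (minus (P w) (P u))).
  { apply (@is_RInt_derive R_CompleteNormedModule).
    - intros x _. unfold P, gap_interp. cbv zeta. auto_derive; [lra|].
      match goal with |- ?X = ?Y => change (@eq R X Y) end. field. lra.
    - intros x _. apply continuity_pt_filterlim, gap_interp_continuous; auto. }
  rewrite (is_RInt_unique _ _ _ _ HP). unfold P, minus, plus, opp. simpl.
  rewrite Rdiv_diag by lra. unfold Rdiv. rewrite Rminus_diag. field. lra.
Qed.
Section IntervalTimeScale.
Variables (T : R -> Prop) (a b : R).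
Hypotheses (HT : time_scale T) (Ta : T a) (Tb : T b) (Hab : a < b).

Local Notation I := (interval_ts T a b).
Local Notation σ := (Defs.sigma I).
Local Notation ρ := (Defs.rho I).

Lemma interval_a : I a. Proof. split; auto; lra. Qed.
Lemma interval_b : I b. Proof. split; auto; lra. Qed.
Lemma interval_bounds t : I t -> a <= t <= b. Proof. intros [_ H]; exact H. Qed.

Lemma interval_closed x : (forall e, 0 < e -> exists y, I y /\ Rabs (y - x) < e) -> I x.
Proof.
  intros Hx. repeat split.
  - apply (proj2 HT). intros e He. destruct (Hx e He) as [y [[Ty _] Hy]]. eauto.
  - apply Rnot_lt_le; intro Hxa. destruct (Hx (a - x)) as [y [[_ Hy] Hxy]]; [lra|].
    apply Rabs_lt_between in Hxy. lra.
  - apply Rnot_lt_le; intro Hbx. destruct (Hx (x - b)) as [y [[_ Hy] Hxy]]; [lra|].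
    apply Rabs_lt_between in Hxy. lra.
Qed.

Lemma sigma_cases t : I t ->
  ((forall y, ~ (I y /\ t < y)) /\ σ t = t) \/
  ((forall y, I y -> t < y -> σ t <= y) /\
   (forall e, 0 < e -> exists y, I y /\ t < y /\ y < σ t + e) /\ t <= σ t /\ I (σ t)).
Proof.
  intros It. destruct (classic (exists y, I y /\ t < y)) as [Hne|Hne].
  - right. destruct (Glb_Rbar_finite (fun s => I s /\ t < s) t Hne) as [c [Ec [Hlb [Happ Htc]]]].
    { intros y [_ Hy]; lra. }
    unfold Defs.sigma. rewrite Ec. split; [|split; [|split]]; auto.
    + intros e He. destruct (Happ e He) as [y [[Iy Hty] Hy]]. eauto.
    + apply interval_closed. intros e He. destruct (Happ e He) as [y [[Iy Hty] Hy]].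
      exists y; split; auto. assert (c <= y) by auto. rewrite Rabs_right; lra.
  - left. split. { intros y Hy. apply Hne. eauto. }
    unfold Defs.sigma. rewrite Glb_Rbar_empty; auto. intros y Hy; apply Hne; eauto.
Qed.

Lemma sigma_ge t : I t -> t <= σ t.
Proof. intros It. destruct (sigma_cases t It) as [[_ E]|[_ [_ [H _]]]]; lra. Qed.

Lemma sigma_in t : I t -> I (σ t).
Proof. intros It. destruct (sigma_cases t It) as [[_ ->]|[_ [_ [_ H]]]]; auto. Qed.

Lemma sigma_le_next t y : I t -> I y -> t < y -> σ t <= y.
Proof.
  intros It Iy Hty. destruct (sigma_cases t It) as [[H _]|[H _]]; auto.
  exfalso; eapply H; eauto.
Qed.

Lemma right_dense_approx t : I t -> σ t = t -> t < b ->
  forall d, 0 < d -> exists y, I y /\ t < y /\ y < t + d.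
Proof.
  intros It Et Htb d Hd. destruct (sigma_cases t It) as [[H _]|[_ [H _]]].
  - exfalso; apply (H b). split; [apply interval_b | auto].
  - rewrite Et in H. auto.
Qed.

Lemma sigma_b : σ b = b.
Proof.
  destruct (sigma_cases b interval_b) as [[_ E]|[_ [H _]]]; auto.
  destruct (H 1) as [y [Iy [Hby _]]]; [lra|]. apply interval_bounds in Iy. lra.
Qed.

Lemma rho_cases t : I t ->
  ((forall y, ~ (I y /\ y < t)) /\ ρ t = t) \/
  ((forall y, I y -> y < t -> y <= ρ t) /\
   (forall e, 0 < e -> exists y, I y /\ y < t /\ ρ t - e < y) /\ ρ t <= t /\ I (ρ t)).
Proof.
  intros It. destruct (classic (exists y, I y /\ y < t)) as [Hne|Hne].
  - right. destruct (Lub_Rbar_finite (fun s => I s /\ s < t) t Hne) as [c [Ec [Hub [Happ Hct]]]].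
    { intros y [_ Hy]; lra. }
    unfold Defs.rho. rewrite Ec. split; [|split; [|split]]; auto.
    + intros e He. destruct (Happ e He) as [y [[Iy Hyt] Hy]]. eauto.
    + apply interval_closed. intros e He. destruct (Happ e He) as [y [[Iy Hyt] Hy]].
      exists y; split; auto. assert (y <= c) by auto. rewrite Rabs_left1; lra.
  - left. split. { intros y Hy. apply Hne. eauto. }
    unfold Defs.rho. rewrite Lub_Rbar_empty; auto. intros y Hy; apply Hne; eauto.
Qed.

Lemma rho_le t : I t -> ρ t <= t.
Proof. intros It. destruct (rho_cases t It) as [[_ E]|[_ [_ [H _]]]]; lra. Qed.

Lemma rho_in t : I t -> I (ρ t).
Proof. intros It. destruct (rho_cases t It) as [[_ ->]|[_ [_ [_ H]]]]; auto. Qed.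

Lemma rho_ge_prev t y : I t -> I y -> y < t -> y <= ρ t.
Proof.
  intros It Iy Hyt. destruct (rho_cases t It) as [[H _]|[H _]]; auto.
  exfalso; eapply H; eauto.
Qed.

Lemma left_dense_approx t : I t -> ρ t = t -> a < t ->
  forall u, u < t -> exists y, I y /\ u < y /\ y < t.
Proof.
  intros It Et Hat u Hu. destruct (rho_cases t It) as [[H _]|[_ [H _]]].
  - exfalso; apply (H a). split; [apply interval_a | auto].
  - rewrite Et in H. destruct (H (t - u)) as [y [Iy [Hyt Hy]]]; [lra|].
    exists y; split; [auto | split; lra].
Qed.

Lemma sigma_rho t : I t -> ρ t < t -> σ (ρ t) = t.
Proof.
  intros It Hrt. assert (Ip : I (ρ t)) by (apply rho_in; auto).
  assert (Hle : σ (ρ t) <= t) by (apply sigma_le_next; auto).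
  apply Rle_antisym; auto. apply Rnot_lt_le; intro Hlt.
  destruct (Req_dec (σ (ρ t)) (ρ t)) as [E|E].
  - assert (Hpb : ρ t < b) by (destruct (interval_bounds t It); lra).
    destruct (right_dense_approx _ Ip E Hpb (t - ρ t)) as [y [Iy [Hy1 Hy2]]]; [lra|].
    assert (y <= ρ t) by (apply rho_ge_prev; auto; lra). lra.
  - assert (σ (ρ t) <= ρ t) by (apply rho_ge_prev; auto; apply sigma_in; auto).
    assert (Hge := sigma_ge _ Ip). lra.
Qed.

Lemma kappa_of_lt t : I t -> t < b -> kappa I t.
Proof. intros It Htb. split; auto. intros [H _]. specialize (H b interval_b). lra. Qed.

Lemma kappa_of_left_dense t : I t -> ρ t = t -> kappa I t.
Proof. intros It Et. split; auto. intros [_ H]. exact (H Et). Qed.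

Lemma kappa_in t : kappa I t -> I t.
Proof. intros [H _]; exact H. Qed.

Lemma kappa_cases t : kappa I t -> t < b \/ (t = b /\ ρ t = t).
Proof.
  intros [It Hk]. destruct (interval_bounds t It) as [_ [H|H]]; [left; auto|right; split; auto].
  apply NNPP; intro Hn. apply Hk. split; auto. intros s Is. apply interval_bounds in Is. lra.
Qed.

Lemma kappa_approx t : kappa I t -> t < σ t \/
  (σ t = t /\ forall d, 0 < d -> exists y, I y /\ y <> t /\ Rabs (y - t) < d).
Proof.
  intros Kt. assert (It := kappa_in t Kt). destruct (Req_dec (σ t) t) as [Es|Es].
  2: { left. assert (Hge := sigma_ge t It). lra. }
  right. split; auto. intros d Hd. destruct (kappa_cases t Kt) as [Htb|[Htb Er]].
  - destruct (right_dense_approx t It Es Htb d Hd) as [y [Iy [Hy1 Hy2]]].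
    exists y. split; [auto | split; [lra | rewrite Rabs_right; lra]].
  - destruct (left_dense_approx t It Er (ltac:(lra)) (t - d)) as [y [Iy [Hy1 Hy2]]]; [lra|].
    exists y. split; [auto | split; [lra | rewrite Rabs_left; lra]].
Qed.

Lemma time_scale_induction (P : R -> Prop) s : I s -> P s ->
  (forall t, I t -> s <= t -> t < σ t -> P t -> P (σ t)) ->
  (forall t, I t -> s <= t -> t < b -> σ t = t -> P t ->
     exists d, 0 < d /\ forall y, I y -> t < y < t + d -> P y) ->
  (forall t, I t -> s < t -> ρ t = t -> (forall y, I y -> s <= y < t -> P y) -> P t) ->
  forall t, I t -> s <= t -> P t.
Proof.
  intros Is Ps Hscat Hrd Hld. apply NNPP; intro Hn.
  assert (Hex : exists t, I t /\ s <= t /\ ~ P t).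
  { apply NNPP; intro H0. apply Hn. intros t It Hst. apply NNPP; intro H1. apply H0. eauto. }
  destruct (Glb_Rbar_finite (fun t => I t /\ s <= t /\ ~ P t) s Hex) as [c [_ [Hlb [Happ Hsc]]]].
  { intros y [_ [Hy _]]; exact Hy. }
  assert (Ic : I c).
  { apply interval_closed. intros e He. destruct (Happ e He) as [y [Cy Hy]].
    exists y; split; [apply Cy|]. assert (c <= y) by (apply Hlb; auto). rewrite Rabs_right; lra. }
  assert (Pbelow : forall y, I y -> s <= y < c -> P y).
  { intros y Iy Hy. apply NNPP; intro Hny. assert (c <= y) by (apply Hlb; tauto). lra. }
  assert (Hcounter_gt : forall e, 0 < e -> P c -> exists y, I y /\ c < y < c + e /\ ~ P y).
  { intros e He Pc. destruct (Happ e He) as [y [[Iy [Hsy nPy]] Hy]].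
    assert (c <= y) by (apply Hlb; tauto).
    destruct (Req_dec y c) as [->|]; [contradiction|].
    exists y; split; [auto | split; [lra | auto]]. }
  destruct (classic (P c)) as [Pc|nPc].
  - assert (Hcb : c < b).
    { destruct (Hcounter_gt 1 ltac:(lra) Pc) as [y [Iy [Hy _]]].
      destruct (interval_bounds y Iy). lra. }
    destruct (Req_dec (σ c) c) as [Es|Es].
    + destruct (Hrd c Ic Hsc Hcb Es Pc) as [d [Hd Hnear]].
      destruct (Hcounter_gt d Hd Pc) as [y [Iy [Hy nPy]]]. exact (nPy (Hnear y Iy Hy)).
    + assert (Hge := sigma_ge c Ic).
      destruct (Hcounter_gt (σ c - c) ltac:(lra) Pc) as [y [Iy [Hy _]]].
      assert (σ c <= y) by (apply sigma_le_next; auto; lra). lra.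
  - assert (Hsc' : s < c) by (destruct Hsc as [|<-]; auto; contradiction).
    apply nPc. destruct (Req_dec (ρ c) c) as [Er|Er].
    + apply Hld; auto.
    + assert (Hlt : ρ c < c) by (assert (H := rho_le c Ic); lra).
      rewrite <- (sigma_rho c Ic Hlt). assert (Ip := rho_in c Ic).
      assert (Hsp : s <= ρ c) by (apply rho_ge_prev; auto).
      apply Hscat; auto. rewrite sigma_rho; auto.
Qed.

Lemma Rabs_eq0_of_le_eps_mult x K : 0 <= K -> (forall e, 0 < e -> Rabs x <= e * K) -> x = 0.
Proof.
  intros HK Hx. apply Rabs_eq_0, Rle_antisym; [|apply Rabs_pos].
  apply Rle_plus_epsilon. intros eps Heps.
  assert (Hq : 0 < eps / (K + 1)) by (apply Rdiv_lt_0_compat; lra).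
  assert (Hk : eps / (K + 1) * K <= eps).
  { apply Rmult_le_reg_r with (K + 1); [lra|].
    replace (eps / (K + 1) * K * (K + 1)) with (eps * K) by (field; lra). nra. }
  specialize (Hx _ Hq). lra.
Qed.

Local Notation D := (has_delta_deriv I).

Lemma delta_deriv_scattered H t c : I t -> D H t c -> H (σ t) - H t = c * (σ t - t).
Proof.
  intros It Hd. assert (Hge := sigma_ge t It).
  apply Rminus_diag_uniq, (Rabs_eq0_of_le_eps_mult _ (σ t - t)); [lra|].
  intros e He. destruct (Hd e He) as [d [Hdpos Hnear]].
  specialize (Hnear t It). rewrite Rminus_diag, Rabs_R0, (Rabs_right (σ t - t)) in Hnear by lra.
  exact (Hnear Hdpos).
Qed.

Lemma delta_deriv_continuous H t c : I t -> D H t c ->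
  forall eta, 0 < eta -> exists d, 0 < d /\
    forall s, I s -> Rabs (s - t) < d -> Rabs (H s - H t) <= eta.
Proof.
  intros It Hd eta Heta. set (mu := σ t - t).
  assert (Hmu : 0 <= mu) by (generalize (sigma_ge t It); unfold mu; lra).
  assert (Hc := Rabs_pos c).
  set (e := eta / (4 * (mu + 1))).
  assert (He : 0 < e) by (apply Rdiv_lt_0_compat; lra).
  assert (Hemu : e * (mu + 1) = eta / 4) by (unfold e; field; lra).
  set (k := eta / (2 * (Rabs c + 1))).
  assert (Hk : 0 < k) by (apply Rdiv_lt_0_compat; lra).
  assert (Hkc : k * (Rabs c + 1) = eta / 2) by (unfold k; field; lra).
  destruct (Hd e He) as [d [Hdpos Hnear]].
  exists (Rmin d (Rmin 1 k)). split; [repeat apply Rmin_pos; lra|].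
  intros s Is Hs.
  assert (Hsd : Rabs (s - t) < d) by (eapply Rlt_le_trans; [exact Hs | apply Rmin_l]).
  assert (Hs1 : Rabs (s - t) < 1)
    by (eapply Rlt_le_trans; [exact Hs | eapply Rle_trans; [apply Rmin_r | apply Rmin_l]]).
  assert (Hsk : Rabs (s - t) < k)
    by (eapply Rlt_le_trans; [exact Hs | eapply Rle_trans; [apply Rmin_r | apply Rmin_r]]).
  assert (Hat_s := Hnear s Is Hsd).
  assert (Hat_t := Hnear t It). rewrite Rminus_diag, Rabs_R0 in Hat_t. specialize (Hat_t Hdpos).
  fold mu in Hat_t. rewrite (Rabs_right mu) in Hat_t by lra.
  assert (Hdist : Rabs (σ t - s) <= mu + 1).
  { replace (σ t - s) with (mu + (t - s)) by (unfold mu; ring).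
    eapply Rle_trans; [apply Rabs_triang|]. rewrite Rabs_right, Rabs_minus_sym by lra. lra. }
  (* H s - H t is the difference of two linearisation errors at sigma t, plus c (s - t) *)
  replace (H s - H t) with (- (H (σ t) - H s - c * (σ t - s))
     + (H (σ t) - H t - c * mu) + c * (s - t)) by (unfold mu; ring).
  eapply Rle_trans; [apply Rabs_triang|]. eapply Rle_trans; [apply Rplus_le_compat_r, Rabs_triang|].
  rewrite Rabs_Ropp, Rabs_mult.
  assert (e * Rabs (σ t - s) <= e * (mu + 1)) by (apply Rmult_le_compat_l; lra).
  assert (Rabs c * Rabs (s - t) <= Rabs c * k) by (apply Rmult_le_compat_l; lra).
  nra.
Qed.

Lemma delta_deriv_lin F G t c1 c2 al be : D F t c1 -> D G t c2 ->
  D (fun x => al * F x + be * G x) t (al * c1 + be * c2).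
Proof.
  intros HF HG e He. assert (Hal := Rabs_pos al). assert (Hbe := Rabs_pos be).
  set (e' := e / (Rabs al + Rabs be + 1)).
  assert (He' : 0 < e') by (apply Rdiv_lt_0_compat; lra).
  assert (Hee : e' * (Rabs al + Rabs be + 1) = e) by (unfold e'; field; lra).
  destruct (HF e' He') as [d1 [Hd1 HF1]]. destruct (HG e' He') as [d2 [Hd2 HG2]].
  exists (Rmin d1 d2). split; [apply Rmin_pos; lra|]. intros s Is Hs.
  assert (EF := HF1 s Is (Rlt_le_trans _ _ _ Hs (Rmin_l _ _))).
  assert (EG := HG2 s Is (Rlt_le_trans _ _ _ Hs (Rmin_r _ _))).
  set (z := Rabs (σ t - s)) in *. assert (Hz : 0 <= z) by apply Rabs_pos.
  replace (al * F (σ t) + be * G (σ t) - (al * F s + be * G s) - (al * c1 + be * c2) * (σ t - s))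
    with (al * (F (σ t) - F s - c1 * (σ t - s)) + be * (G (σ t) - G s - c2 * (σ t - s)))
    by ring.
  eapply Rle_trans; [apply Rabs_triang|]. rewrite !Rabs_mult.
  assert (Rabs al * Rabs (F (σ t) - F s - c1 * (σ t - s)) <= Rabs al * (e' * z))
    by (apply Rmult_le_compat_l; auto).
  assert (Rabs be * Rabs (G (σ t) - G s - c2 * (σ t - s)) <= Rabs be * (e' * z))
    by (apply Rmult_le_compat_l; auto).
  assert (0 <= e' * z) by (apply Rmult_le_pos; lra).
  nra.
Qed.

Lemma delta_deriv_id t : D (fun x => x) t 1.
Proof.
  intros e He. exists 1. split; [lra|]. intros s _ _.
  replace (σ t - s - 1 * (σ t - s)) with 0 by ring.
  rewrite Rabs_R0. apply Rmult_le_pos; [lra | apply Rabs_pos].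
Qed.

Lemma delta_deriv_locally_const H t c : kappa I t -> (forall y, I y -> H y = H t) ->
  D H t c -> c = 0.
Proof.
  intros Kt Hconst Hd. assert (It := kappa_in t Kt).
  destruct (kappa_approx t Kt) as [Hrs|[Es Happ]].
  - assert (E := delta_deriv_scattered H t c It Hd).
    rewrite (Hconst _ (sigma_in t It)), Rminus_diag in E.
    symmetry in E. apply Rmult_integral in E. destruct E; auto. lra.
  - apply (Rabs_eq0_of_le_eps_mult c 1); [lra|]. intros e He.
    destruct (Hd e He) as [d [Hdpos Hnear]]. destruct (Happ d Hdpos) as [y [Iy [Hyt Hy]]].
    specialize (Hnear y Iy Hy). rewrite Es, (Hconst y Iy) in Hnear.
    replace (H t - H t - c * (t - y)) with (- (c * (t - y))) in Hnear by ring.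
    rewrite Rabs_Ropp, Rabs_mult in Hnear. rewrite Rmult_1_r.
    assert (Hpos : 0 < Rabs (t - y)) by (apply Rabs_pos_lt; lra).
    apply Rmult_le_reg_r with (Rabs (t - y)); auto.
Qed.

Lemma delta_deriv_nonneg_mono H h :
  (forall t, kappa I t -> D H t (h t)) -> (forall t, kappa I t -> 0 <= h t) ->
  forall s t, I s -> I t -> s <= t -> H s <= H t.
Proof.
  intros Hd Hh s t Is It Hst.
  assert (Hslack : forall e, 0 < e -> forall y, I y -> s <= y -> H s - e * (y - s) <= H y).
  { intros e He. apply (time_scale_induction (fun y => H s - e * (y - s) <= H y)); auto.
    - lra.
    - intros u Iu Hsu Hrs Pu.
      assert (Ku : kappa I u).
      { apply kappa_of_lt; auto. destruct (interval_bounds u Iu) as [_ [Hub | Hub]]; auto.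
        subst u. rewrite sigma_b in Hrs. lra. }
      assert (E := delta_deriv_scattered H u (h u) Iu (Hd u Ku)).
      assert (Hhu := Hh u Ku). nra.
    - intros u Iu Hsu Hub Es Pu. assert (Hhu := Hh u (kappa_of_lt u Iu Hub)).
      destruct (Hd u (kappa_of_lt u Iu Hub) e He) as [d [Hdpos Hnear]].
      exists d. split; auto. intros y Iy Hy.
      specialize (Hnear y Iy ltac:(rewrite Rabs_right; lra)).
      rewrite Es, (Rabs_left (u - y)) in Hnear by lra. apply Rabs_le_between in Hnear. nra.
    - intros u Iu Hsu Er Pbelow. apply Rnot_lt_le; intro Hlt.
      (* H is continuous at the left-dense point u, so it cannot jump below the bound *)
      set (eta := (H s - e * (u - s) - H u) / 2).
      destruct (delta_deriv_continuous H u (h u) Iu (Hd u (kappa_of_left_dense u Iu Er)) eta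
        ltac:(unfold eta; lra)) as [d [Hdpos Hnear]].
      assert (Hau : a < u) by (destruct (interval_bounds s Is); lra).
      destruct (left_dense_approx u Iu Er Hau (Rmax s (u - d))) as [y [Iy [Hy1 Hy2]]].
      { apply Rmax_lub_lt; lra. }
      assert (Hsy := Rmax_l s (u - d)). assert (Hdy := Rmax_r s (u - d)).
      assert (Py := Pbelow y Iy ltac:(lra)).
      specialize (Hnear y Iy ltac:(rewrite Rabs_left; lra)). apply Rabs_le_between in Hnear.
      unfold eta in Hnear. nra. }
  apply Rle_plus_epsilon. intros eps Heps.
  set (e := eps / (t - s + 1)). assert (He : 0 < e) by (apply Rdiv_lt_0_compat; lra).
  assert (Hee : e * (t - s + 1) = eps) by (unfold e; field; lra).
  specialize (Hslack e He t It Hst). nra.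
Qed.

Lemma delta_deriv_nonneg_flat H h :
  (forall t, kappa I t -> D H t (h t)) -> (forall t, kappa I t -> 0 <= h t) ->
  H a = H b -> forall t, kappa I t -> h t = 0.
Proof.
  intros Hd Hh Eab t Kt.
  assert (Ha : forall y, I y -> H y = H a).
  { intros y Iy. destruct (interval_bounds y Iy). apply Rle_antisym.
    - rewrite Eab. apply (delta_deriv_nonneg_mono H h); auto. apply interval_b.
    - apply (delta_deriv_nonneg_mono H h); auto. apply interval_a. }
  apply (delta_deriv_locally_const H t); auto.
  intros y Iy. rewrite (Ha y Iy), (Ha t (kappa_in t Kt)). reflexivity.
Qed.

Lemma delta_deriv_zero_const H : (forall t, kappa I t -> D H t 0) -> H a = H b.
Proof.
  intros Hd. assert (Hab' : a <= b) by lra.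
  apply Rle_antisym.
  - apply (delta_deriv_nonneg_mono H (fun _ => 0)); auto using interval_a, interval_b; intros; lra.
  - assert (Hneg : -1 * H a + 0 * H a <= -1 * H b + 0 * H b).
    { apply (delta_deriv_nonneg_mono (fun x => -1 * H x + 0 * H x) (fun _ => -1 * 0 + 0 * 0));
        auto using interval_a, interval_b.
      - intros t Kt. apply delta_deriv_lin; auto.
      - intros; lra. }
    lra.
Qed.

Lemma antideriv_nonneg h H : is_delta_antideriv I h H -> (forall t, kappa I t -> 0 <= h t) ->
  H a <= H b /\ (H a = H b <-> forall t, kappa I t -> h t = 0).
Proof.
  intros HH Hh. split; [|split].
  - apply (delta_deriv_nonneg_mono H h); auto using interval_a, interval_b; lra.
  - apply (delta_deriv_nonneg_flat H h); auto.
  - intros H0. apply delta_deriv_zero_const. intros t Kt. rewrite <- (H0 t Kt). auto.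
Qed.

Lemma antideriv_pos h H : is_delta_antideriv I h H -> (forall t, kappa I t -> 0 < h t) -> H a < H b.
Proof.
  intros HH Hh.
  destruct (antideriv_nonneg h H HH (fun t Kt => Rlt_le _ _ (Hh t Kt))) as [[Hlt|Heq] [Hflat _]];
    auto.
  assert (Ka : kappa I a) by (apply kappa_of_lt; [apply interval_a | lra]).
  specialize (Hflat Heq a Ka). specialize (Hh a Ka). lra.
Qed.

Lemma delta_integral_antideriv f F : is_delta_antideriv I f F -> delta_integral I f a b = F b - F a.
Proof.
  intros HF. unfold delta_integral. cbv zeta.
  set (F0 := epsilon _ (is_delta_antideriv I f)).
  assert (HF0 : is_delta_antideriv I f F0) by (apply epsilon_spec; eauto).
  assert (E : (fun x => 1 * F0 x + -1 * F x) a = (fun x => 1 * F0 x + -1 * F x) b).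
  { apply (delta_deriv_zero_const (fun x => 1 * F0 x + -1 * F x)). intros t Kt.
    replace 0 with (1 * f t + -1 * f t) by ring. apply delta_deriv_lin; auto. }
  simpl in E. lra.
Qed.

Lemma delta_deriv_ext F G t c c' : (forall x, F x = G x) -> c = c' -> D F t c -> D G t c'.
Proof.
  intros HFG <- HF e He. destruct (HF e He) as [d [Hd Hnear]].
  exists d. split; auto. intros s Is Hs. rewrite <- !HFG. auto.
Qed.

Lemma antideriv_affine f g F G al be c :
  is_delta_antideriv I f F -> is_delta_antideriv I g G ->
  is_delta_antideriv I (fun t => al * f t + be * g t + c) (fun x => al * F x + be * G x + c * x).
Proof.
  intros HF HG t Kt.
  apply (delta_deriv_ext (fun x => 1 * (al * F x + be * G x) + c * x) _ t (1 * (al * f t + be * g t) + c * 1));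
    [intros; ring | ring |].
  apply delta_deriv_lin; [apply delta_deriv_lin; auto | apply delta_deriv_id].
Qed.

Lemma antideriv_of_const f F c : is_delta_antideriv I f F ->
  (forall t, kappa I t -> f t = c) -> F b - F a = c * (b - a).
Proof.
  intros HF Hc.
  assert (E : (fun x => 1 * F x + - c * x) a = (fun x => 1 * F x + - c * x) b).
  { apply (delta_deriv_zero_const (fun x => 1 * F x + - c * x)). intros t Kt.
    apply (delta_deriv_ext (fun x => 1 * F x + - c * x) _ t (1 * f t + - c * 1));
      [reflexivity | rewrite Hc by auto; ring |].
    apply delta_deriv_lin; [apply HF; auto | apply delta_deriv_id]. }
  simpl in E. lra.
Qed.

Section Extension.
Variable f : R -> R.
Hypothesis Hrd : rd_continuous I f.

Definition left_limit t := epsilon (inhabits 0) (fun L => forall eps, 0 < eps ->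
  exists delta, 0 < delta /\ forall s, kappa I s -> t - delta < s < t -> Rabs (f s - L) < eps).

Lemma left_limit_spec t : kappa I t -> ρ t = t -> forall eps, 0 < eps ->
  exists delta, 0 < delta /\ forall s, kappa I s -> t - delta < s < t ->
    Rabs (f s - left_limit t) < eps.
Proof. intros Kt Et. unfold left_limit. apply epsilon_spec. exact (proj2 (Hrd t Kt) Et). Qed.

(* A continuous extension must take the left limit of f at left-dense, right-scattered points. *)
Definition node_value t :=
  if Req_dec_T (σ t) t then f t
  else if excluded_middle_informative (ρ t = t /\ a < t) then left_limit t else f t.

Definition gap_fun u := gap_interp u (σ u) (node_value u) (node_value (σ u)) (f u).

Definition prev_point x :=
  match Lub_Rbar (fun s => I s /\ s <= x) with Finite y => y | _ => x end.

Definition ext x :=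
  if Rlt_dec x a then node_value a
  else if Rlt_dec b x then node_value b
  else if excluded_middle_informative (I x) then node_value x
  else gap_fun (prev_point x) x.

Lemma ext_in x : I x -> ext x = node_value x.
Proof.
  intros Ix. destruct (interval_bounds x Ix). unfold ext.
  destruct (Rlt_dec x a); [lra|]. destruct (Rlt_dec b x); [lra|].
  destruct (excluded_middle_informative (I x)); tauto.
Qed.

Lemma prev_point_gap x : a <= x <= b -> ~ I x -> I (prev_point x) /\
  prev_point x < x < σ (prev_point x) /\ (forall y, I y -> y <= x -> y <= prev_point x).
Proof.
  intros Hx nIx.
  destruct (Lub_Rbar_finite (fun s => I s /\ s <= x) x) as [c [Ec [Hub [Happ Hcx]]]].
  { exists a. split; [apply interval_a | lra]. } { intros y [_ Hy]; auto. }
  unfold prev_point. rewrite Ec.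
  assert (Ic : I c).
  { apply interval_closed. intros e He. destruct (Happ e He) as [y [[Iy Hyx] Hy]].
    exists y; split; auto. assert (y <= c) by auto. rewrite Rabs_left1; lra. }
  assert (Hcx' : c < x) by (destruct Hcx as [|<-]; auto; contradiction).
  assert (Hxb : x < b) by 
    (destruct Hx as [_ [Hxb | Hxb]]; auto; subst x; exfalso; apply nIx, interval_b).
  split; [auto | split; [split; auto | intros y Iy Hy; auto]].
  apply Rnot_le_lt; intro Hsx. destruct (Req_dec (σ c) x) as [E|E].
  - apply nIx. rewrite <- E. apply sigma_in; auto.
  - assert (Hge := sigma_ge c Ic).
    destruct (sigma_cases c Ic) as [[Hnone _]|[_ [Hnext _]]].
    + apply (Hnone b). split; [apply interval_b | lra].
    + destruct (Hnext (x - σ c)) as [y [Iy [Hy1 Hy2]]]; [lra|].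
      assert (y <= c) by (apply Hub; split; auto; lra). lra.
Qed.

Lemma prev_point_eq u x : I u -> u <= x < σ u -> prev_point x = u.
Proof.
  intros Iu Hx.
  destruct (Lub_Rbar_finite (fun s => I s /\ s <= x) x) as [c [Ec [Hub [Happ Hcx]]]].
  { exists u. split; auto; lra. } { intros y [_ Hy]; auto. }
  unfold prev_point. rewrite Ec. apply Rle_antisym.
  - apply Rnot_lt_le; intro Hl. destruct (Happ (c - u)) as [y [[Iy Hyx] Hy]]; [lra|].
    assert (σ u <= y) by (apply sigma_le_next; auto; lra). lra.
  - apply Hub. split; auto; lra.
Qed.

Lemma ext_gap u x : I u -> u < σ u -> u <= x <= σ u -> ext x = gap_fun u x.
Proof.
  intros Iu Hu Hx. unfold gap_fun.
  destruct (Req_dec x u) as [->|Hxu]; [rewrite ext_in, gap_interp_left; auto|].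
  destruct (Req_dec x (σ u)) as [->|Hxs]; [rewrite ext_in, gap_interp_right; auto; apply sigma_in; auto|].
  assert (nIx : ~ I x).
  { intros Ix. assert (σ u <= x) by (apply sigma_le_next; auto; lra). lra. }
  destruct (interval_bounds u Iu). destruct (interval_bounds _ (sigma_in u Iu)).
  unfold ext. destruct (Rlt_dec x a); [lra|]. destruct (Rlt_dec b x); [lra|].
  destruct (excluded_middle_informative (I x)); [contradiction|].
  rewrite (prev_point_eq u x); auto. lra.
Qed.

Lemma node_value_rd t : σ t = t -> node_value t = f t.
Proof. intros E. unfold node_value. destruct (Req_dec_T (σ t) t); tauto. Qed.

Section Near.
Variables (lo hi lam e : R).
Hypotheses (Hhi : hi <= b) (He : 0 < e)
  (Hf : forall s, kappa I s -> lo < s < hi -> Rabs (f s - lam) < e).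

Lemma node_value_near y : I y -> lo < y < hi -> Rabs (node_value y - lam) <= 2 * e.
Proof.
  intros Iy Hy. assert (Ky : kappa I y) by (apply kappa_of_lt; auto; lra).
  assert (Hfy : Rabs (f y - lam) <= 2 * e) by (apply Rlt_le, Rlt_le_trans with e; auto; lra).
  unfold node_value. destruct (Req_dec_T (σ y) y); auto.
  destruct (excluded_middle_informative (ρ y = y /\ a < y)) as [[Er Hay]|]; auto.
  destruct (left_limit_spec y Ky Er e He) as [d [Hd Hlim]].
  destruct (left_dense_approx y Iy Er Hay (Rmax lo (y - d))) as [s [Is [Hs1 Hs2]]].
  { apply Rmax_lub_lt; lra. }
  assert (Hlos := Rmax_l lo (y - d)). assert (Hds := Rmax_r lo (y - d)).
  assert (Ks : kappa I s) by (apply kappa_of_lt; auto; lra).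
  assert (H1 := Hf s Ks ltac:(lra)). assert (H2 := Hlim s Ks ltac:(lra)).
  replace (left_limit y - lam) with ((f s - lam) - (f s - left_limit y)) by ring.
  eapply Rle_trans; [apply Rabs_triang|]. rewrite Rabs_Ropp. lra.
Qed.

Lemma ext_near_gap u x : I u -> u < σ u -> lo < u -> σ u < hi -> u <= x <= σ u ->
  Rabs (ext x - lam) <= 8 * e.
Proof.
  intros Iu Hu Hlou Hshi Hx. rewrite (ext_gap u x) by auto. unfold gap_fun.
  replace (8 * e) with (4 * (2 * e)) by ring. apply gap_interp_bound; auto.
  - apply node_value_near; auto; lra.
  - apply node_value_near; [apply sigma_in; auto | lra].
  - apply Rlt_le, Rlt_le_trans with e; [|lra]. apply Hf; [apply kappa_of_lt|]; auto; lra.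
Qed.

End Near.

Lemma ext_right_cont_rd t : I t -> t < b -> σ t = t -> right_cont_at ext t.
Proof.
  intros It Htb Es e He. set (e' := e / 8). assert (He' : 0 < e') by (unfold e'; lra).
  destruct (proj1 (Hrd t (kappa_of_lt t It Htb)) Es e' He') as [d [Hd Hnear]].
  set (hi := Rmin (t + d) b).
  assert (Hhi1 : hi <= t + d) by apply Rmin_l. assert (Hhi2 : hi <= b) by apply Rmin_r.
  assert (Hthi : t < hi) by (apply Rmin_glb_lt; lra).
  assert (Hf : forall s, kappa I s -> t < s < hi -> Rabs (f s - f t) < e').
  { intros s Ks Hs. apply Hnear; auto. rewrite Rabs_right; lra. }
  destruct (right_dense_approx t It Es Htb (hi - t)) as [s1 [Is1 [Hs1 Hs2]]]; [lra|].
  exists (s1 - t). split; [lra|]. intros x Hx.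
  rewrite (ext_in t It), node_value_rd by auto.
  destruct (Req_dec x t) as [->|Hxt]; [rewrite ext_in, node_value_rd, Rminus_diag, Rabs_R0; auto; lra|].
  destruct (interval_bounds t It) as [Hat Htb'].
  destruct (classic (I x)) as [Ix|nIx].
  - rewrite ext_in by auto. eapply Rle_trans; [apply (node_value_near t hi (f t) e' Hhi2 He' Hf); auto; lra|].
    unfold e'; lra.
  - destruct (prev_point_gap x ltac:(lra) nIx) as [Iu [[Hux Hxs] Hmax]].
    set (u := prev_point x) in *.
    assert (Htu : t < u).
    { assert (Hle : t <= u) by (apply Hmax; auto; lra). destruct Hle as [|<-]; auto. lra. }
    assert (σ u <= s1) by (apply sigma_le_next; auto; lra).
    replace e with (8 * e') by (unfold e'; lra).
    apply (ext_near_gap t hi (f t) e' Hhi2 He' Hf u); auto; lra.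
Qed.

Lemma ext_left_cont_ld t : I t -> a < t -> ρ t = t -> left_cont_at ext t.
Proof.
  intros It Hat Er e He. set (e' := e / 8). assert (He' : 0 < e') by (unfold e'; lra).
  assert (Kt := kappa_of_left_dense t It Er).
  assert (Hlim : exists d, 0 < d /\
    forall s, kappa I s -> t - d < s < t -> Rabs (f s - node_value t) < e').
  { destruct (Req_dec_T (σ t) t) as [Es|Es].
    - rewrite node_value_rd by auto.
      destruct (proj1 (Hrd t Kt) Es e' He') as [d [Hd Hnear]].
      exists d. split; auto. intros s Ks Hs. apply Hnear; auto. rewrite Rabs_left; lra.
    - replace (node_value t) with (left_limit t).
      + apply left_limit_spec; auto.
      + unfold node_value. destruct (Req_dec_T (σ t) t); [contradiction|].
        destruct (excluded_middle_informative (ρ t = t /\ a < t)); tauto. }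
  destruct Hlim as [d [Hd Hnear]].
  destruct (interval_bounds t It) as [_ Htb].
  set (lo := Rmax a (t - d)).
  assert (Hlo1 : a <= lo) by apply Rmax_l. assert (Hlo2 : t - d <= lo) by apply Rmax_r.
  assert (Hlot : lo < t) by (apply Rmax_lub_lt; lra).
  assert (Hf : forall s, kappa I s -> lo < s < t -> Rabs (f s - node_value t) < e').
  { intros s Ks Hs. apply Hnear; auto; lra. }
  destruct (left_dense_approx t It Er Hat lo Hlot) as [s1 [Is1 [Hs1 Hs2]]].
  exists (t - s1). split; [lra|]. intros x Hx. rewrite (ext_in t It).
  destruct (Req_dec x t) as [->|Hxt]; [rewrite ext_in, Rminus_diag, Rabs_R0; auto; lra|].
  destruct (classic (I x)) as [Ix|nIx].
  - rewrite ext_in by auto.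
    eapply Rle_trans; [apply (node_value_near lo t (node_value t) e' Htb He' Hf); auto; lra|].
    unfold e'; lra.
  - destruct (prev_point_gap x ltac:(lra) nIx) as [Iu [[Hux Hxs] Hmax]].
    set (u := prev_point x) in *.
    assert (Hs1u : s1 <= u) by (apply Hmax; auto; lra).
    destruct (left_dense_approx t It Er Hat u) as [y [Iy [Hy1 Hy2]]]; [lra|].
    assert (σ u <= y) by (apply sigma_le_next; auto).
    replace e with (8 * e') by (unfold e'; lra).
    apply (ext_near_gap lo t (node_value t) e' Htb He' Hf u); auto; lra.
Qed.

Lemma ext_right_cont_rs t : I t -> t < σ t -> right_cont_at ext t.
Proof.
  intros It Hrs. apply (right_cont_at_local _ (gap_fun t) t (σ t - t)); [lra| |].
  - intros x Hx. apply ext_gap; auto; lra.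
  - apply gap_interp_continuous; auto.
Qed.

Lemma ext_left_cont_ls t : I t -> ρ t < t -> left_cont_at ext t.
Proof.
  intros It Hls. assert (Ip := rho_in t It). assert (Es := sigma_rho t It Hls).
  apply (left_cont_at_local _ (gap_fun (ρ t)) t (t - ρ t)); [lra| |].
  - intros x Hx. apply ext_gap; auto; rewrite Es; lra.
  - apply gap_interp_continuous. rewrite Es; auto.
Qed.

Lemma ext_continuous z : continuity_pt ext z.
Proof.
  destruct (Rlt_dec z a) as [Hza|Hza].
  { apply (continuity_pt_locally_ext (fun _ => node_value a) _ (a - z));
      [lra | | apply continuity_pt_const; now intros ? ?].
    intros y Hy. unfold Rdist in Hy. apply Rabs_lt_between in Hy.
    unfold ext. destruct (Rlt_dec y a); [reflexivity | lra]. }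
  destruct (Rlt_dec b z) as [Hbz|Hbz].
  { apply (continuity_pt_locally_ext (fun _ => node_value b) _ (z - b));
      [lra | | apply continuity_pt_const; now intros ? ?].
    intros y Hy. unfold Rdist in Hy. apply Rabs_lt_between in Hy.
    unfold ext. destruct (Rlt_dec y a); [lra|]. destruct (Rlt_dec b y); [reflexivity | lra]. }
  destruct (classic (I z)) as [Iz|nIz].
  - apply continuity_pt_left_right.
    + destruct (Req_dec z a) as [->|Hz].
      * apply (left_cont_at_local _ (fun _ => node_value a) a 1);
          [lra | | apply continuity_pt_const; now intros ? ?].
        intros x Hx. destruct (Req_dec x a) as [->|Hxa]; [apply ext_in, interval_a|].
        unfold ext. destruct (Rlt_dec x a); [reflexivity | lra].
      * destruct (Req_dec (ρ z) z) as [Er|Er]; [apply ext_left_cont_ld; auto; lra|].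
        apply ext_left_cont_ls; auto. assert (H := rho_le z Iz). lra.
    + destruct (Req_dec z b) as [->|Hz].
      * apply (right_cont_at_local _ (fun _ => node_value b) b 1);
          [lra | | apply continuity_pt_const; now intros ? ?].
        intros x Hx. destruct (Req_dec x b) as [->|Hxb]; [apply ext_in, interval_b|].
        unfold ext. destruct (Rlt_dec x a); [lra|]. destruct (Rlt_dec b x); [reflexivity | lra].
      * destruct (Req_dec (σ z) z) as [Es|Es]; [apply ext_right_cont_rd; auto; lra|].
        apply ext_right_cont_rs; auto. assert (H := sigma_ge z Iz). lra.
  - destruct (prev_point_gap z ltac:(lra) nIz) as [Iu [[Huz Hzs] _]].
    set (u := prev_point z) in *.
    apply (continuity_pt_locally_ext (gap_fun u) _ (Rmin (z - u) (σ u - z))).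
    + apply Rmin_pos; lra.
    + intros y Hy. unfold Rdist in Hy. apply Rabs_lt_between in Hy.
      assert (Rmin (z - u) (σ u - z) <= z - u) by apply Rmin_l.
      assert (Rmin (z - u) (σ u - z) <= σ u - z) by apply Rmin_r.
      symmetry. apply ext_gap; auto; lra.
    + apply gap_interp_continuous; lra.
Qed.

Lemma ext_integrable p q : ex_RInt ext p q.
Proof.
  apply (@ex_RInt_continuous R_CompleteNormedModule). intros z _.
  apply continuity_pt_filterlim, ext_continuous.
Qed.

Lemma RInt_ext_sub p q : RInt ext a q - RInt ext a p = RInt ext p q.
Proof.
  rewrite <- (RInt_Chasles ext a p q (ext_integrable a p) (ext_integrable p q)).
  unfold plus; simpl. ring.
Qed.

Lemma RInt_ext_gap u : I u -> u < σ u -> RInt ext u (σ u) = f u * (σ u - u).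
Proof.
  intros Iu Hu. rewrite <- (gap_interp_integral u (σ u) (node_value u) (node_value (σ u)) (f u) Hu).
  apply RInt_ext. intros x Hx. rewrite Rmin_left, Rmax_right in Hx by lra.
  apply ext_gap; auto; lra.
Qed.

Lemma ext_antideriv_rd t : I t -> σ t = t -> has_delta_deriv I (fun x => RInt ext a x) t (f t).
Proof.
  intros It Es e He. destruct (continuity_pt_bound ext t (ext_continuous t) e He) as [d [Hd Hnear]].
  exists d. split; auto. intros s Is Hs. rewrite Es, RInt_ext_sub.
  apply RInt_close_to_const; [apply ext_integrable|].
  intros x Hx. rewrite <- (node_value_rd t Es), <- (ext_in t It). apply Hnear.
  apply Rabs_lt_between in Hs. apply Rabs_lt_between.
  destruct (Rle_dec s t); [rewrite Rmin_left, Rmax_right in Hx | rewrite Rmin_right, Rmax_left in Hx]; lra.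
Qed.

Lemma ext_antideriv_rs t : I t -> t < σ t -> has_delta_deriv I (fun x => RInt ext a x) t (f t).
Proof.
  intros It Hrs e He. set (mu := σ t - t).
  destruct (continuity_pt_bound ext t (ext_continuous t) 1 ltac:(lra)) as [d [Hd Hnear]].
  set (M := Rabs (ext t) + 1 + Rabs (f t)).
  assert (HM : 0 <= M) by (unfold M; generalize (Rabs_pos (ext t)) (Rabs_pos (f t)); lra).
  set (k := e * mu / (M + 1)). assert (Hk : 0 < k) by (apply Rdiv_lt_0_compat; unfold mu; nra).
  assert (Hkk : k * (M + 1) = e * mu) by (unfold k; field; lra).
  exists (Rmin d (Rmin mu k)). split; [repeat apply Rmin_pos; unfold mu; lra|].
  intros s Is Hs.
  assert (Hsd : Rabs (s - t) < d) by (eapply Rlt_le_trans; [exact Hs | apply Rmin_l]).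
  assert (Hsmu : Rabs (s - t) < mu)
    by (eapply Rlt_le_trans; [exact Hs | eapply Rle_trans; [apply Rmin_r | apply Rmin_l]]).
  assert (Hsk : Rabs (s - t) < k)
    by (eapply Rlt_le_trans; [exact Hs | eapply Rle_trans; [apply Rmin_r | apply Rmin_r]]).
  (* no point of [a,b]_T lies in (t, sigma t) *)
  assert (Hst : s <= t).
  { apply Rnot_lt_le; intro Hl. assert (σ t <= s) by (apply sigma_le_next; auto).
    rewrite Rabs_right in Hsmu by lra. unfold mu in Hsmu. lra. }
  rewrite Rabs_left1 in Hsd, Hsk by lra.
  rewrite RInt_ext_sub, <- (RInt_Chasles ext s t (σ t) (ext_integrable _ _) (ext_integrable _ _)).
  unfold plus; simpl. rewrite RInt_ext_gap by auto.
  replace (RInt ext s t + f t * (σ t - t) - f t * (σ t - s)) with (RInt ext s t - f t * (t - s)) by ring.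
  eapply Rle_trans.
  { apply (RInt_close_to_const_le ext s t (f t) M Hst (ext_integrable _ _)). intros x Hx.
    specialize (Hnear x ltac:(rewrite Rabs_left1; lra)).
    replace (ext x - f t) with ((ext x - ext t) + ext t - f t) by ring.
    eapply Rle_trans; [apply Rabs_triang|]. eapply Rle_trans; [apply Rplus_le_compat_r, Rabs_triang|].
    rewrite Rabs_Ropp. unfold M. lra. }
  rewrite Rabs_right by lra.
  assert (M * (t - s) <= M * k) by (apply Rmult_le_compat_l; lra).
  unfold mu in Hkk. nra.
Qed.

End Extension.

Lemma rd_continuous_antideriv f : rd_continuous I f -> exists F, is_delta_antideriv I f F.
Proof.
  intros Hrd. exists (fun x => RInt (ext f) a x). intros t Kt. assert (It := kappa_in t Kt).
  destruct (Req_dec (σ t) t) as [Es|Es].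
  - apply ext_antideriv_rd; auto.
  - apply ext_antideriv_rs; auto. assert (H := sigma_ge t It). lra.
Qed.

End IntervalTimeScale.

Lemma xlnx_continuous y : 0 < y -> forall e, 0 < e -> exists d, 0 < d /\
  forall x, Rabs (x - y) < d -> Rabs (x * ln x - y * ln y) < e.
Proof.
  intros Hy e He.
  assert (Hc : continuous (fun x => x * ln x) y).
  { apply (@ex_derive_continuous R_AbsRing R_NormedModule). auto_derive. lra. }
  apply continuity_pt_filterlim in Hc.
  destruct (continuity_pt_bound _ y Hc (e / 2)) as [d [Hd Hnear]]; [lra|].
  exists d. split; auto. intros x Hx. specialize (Hnear x Hx). lra.
Qed.

Lemma Rabs_xlnx_le_sqrt x : 0 < x < 1 -> Rabs (x * ln x) <= 2 * sqrt x.
Proof.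
  intros Hx. set (r := sqrt x). assert (Hr : 0 < r) by (apply sqrt_lt_R0; lra).
  assert (Ex : x = r * r) by (unfold r; rewrite sqrt_sqrt; lra).
  assert (Hln : ln x = 2 * ln r) by (rewrite Ex, ln_mult by lra; ring).
  (* ln y <= y - 1, applied at y = x and at y = 1 / r *)
  assert (H1 : 1 + ln (/ r) <= exp (ln (/ r))) by apply exp_ineq1_le.
  rewrite exp_ln, ln_Rinv in H1 by (try apply Rinv_0_lt_compat; lra).
  assert (H2 : 1 + ln x <= exp (ln x)) by apply exp_ineq1_le. rewrite exp_ln in H2 by lra.
  rewrite Rabs_left1 by nra.
  assert (Hri : r * / r = 1) by (field; lra).
  assert (H3 : r * (- ln r) <= r * (/ r - 1)) by (apply Rmult_le_compat_l; lra).
  rewrite Hln, Ex. nra.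
Qed.

Lemma xlnx_small e : 0 < e -> exists d, 0 < d /\ forall x, 0 < x < d -> Rabs (x * ln x) < e.
Proof.
  intros He. exists (Rmin 1 ((e / 2) * (e / 2))). split; [apply Rmin_pos; nra|].
  intros x Hx. assert (Rmin 1 ((e / 2) * (e / 2)) <= 1) by apply Rmin_l.
  assert (Rmin 1 ((e / 2) * (e / 2)) <= (e / 2) * (e / 2)) by apply Rmin_r.
  eapply Rle_lt_trans; [apply Rabs_xlnx_le_sqrt; lra|].
  assert (sqrt x < e / 2); [|lra].
  apply Rnot_le_lt; intro Hl. assert (Ex : sqrt x * sqrt x = x) by (apply sqrt_sqrt; lra).
  assert (e / 2 * (e / 2) <= sqrt x * sqrt x) by (apply Rmult_le_compat; lra). lra.
Qed.

Lemma rd_continuous_xlnx S f : rd_continuous S f -> (forall t, kappa S t -> 0 < f t) ->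
  rd_continuous S (fun t => f t * ln (f t)).
Proof.
  intros Hrd Hpos t Kt. destruct (Hrd t Kt) as [Hright Hleft]. split.
  - intros Es e He. destruct (xlnx_continuous (f t) (Hpos t Kt) e He) as [d1 [Hd1 Hphi]].
    destruct (Hright Es d1 Hd1) as [d [Hd Hnear]]. exists d. split; auto.
  - intros Er. destruct (Hleft Er) as [L HL].
    destruct (Rlt_dec 0 L) as [HLpos|HLneg].
    + exists (L * ln L). intros e He. destruct (xlnx_continuous L HLpos e He) as [d1 [Hd1 Hphi]].
      destruct (HL d1 Hd1) as [d [Hd Hnear]]. exists d. split; auto.
    + (* f > 0 forces L = 0, where x ln x tends to 0 *)
      exists 0. intros e He. destruct (xlnx_small e He) as [d1 [Hd1 Hphi]].
      destruct (HL d1 Hd1) as [d [Hd Hnear]]. exists d. split; auto. intros s Ks Hs.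
      rewrite Rminus_0_r. apply Hphi. specialize (Hnear s Ks Hs). apply Rabs_lt_between in Hnear.
      specialize (Hpos s Ks). lra.
Qed.

Lemma xlnx_tangent y m : 0 < y -> 0 < m ->
  0 <= y * ln y - (ln m + 1) * y + m /\ (y * ln y - (ln m + 1) * y + m = 0 -> y = m).
Proof.
  intros Hy Hm. set (z := m / y). assert (Hz : 0 < z) by (apply Rdiv_lt_0_compat; auto).
  assert (Ez : ln z = ln m - ln y)
    by (unfold z, Rdiv; rewrite ln_mult, ln_Rinv by (try apply Rinv_0_lt_compat; auto); ring).
  assert (Ezy : z * y = m) by (unfold z; field; lra).
  (* the gap is y (z - 1 - ln z) >= 0, with equality iff z = 1 *)
  replace (y * ln y - (ln m + 1) * y + m) with (y * (z - 1 - ln z)) by (rewrite Ez, <- Ezy; ring).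
  assert (H1 : 1 + ln z <= exp (ln z)) by apply exp_ineq1_le. rewrite exp_ln in H1 by auto.
  split; [apply Rmult_le_pos; lra|]. intros E.
  destruct (Req_dec (ln z) 0) as [E0|E0].
  - assert (Hz1 : z = 1) by (rewrite <- (exp_ln z), E0 by auto; apply exp_0).
    rewrite <- Ezy, Hz1. ring.
  - assert (H2 : 1 + ln z < exp (ln z)) by (apply exp_ineq1; auto). rewrite exp_ln in H2 by auto.
    assert (0 < y * (z - 1 - ln z)) by (apply Rmult_lt_0_compat; lra). lra.
Qed.

Theorem corollary2p13 (T : R -> Prop) (a b : R) (f : R -> R) :
  time_scale T -> T a -> T b -> a < b ->
  rd_continuous (interval_ts T a b) f ->
  (forall t, kappa (interval_ts T a b) t -> 0 < f t) ->
  delta_integral (interval_ts T a b) (fun t => f t * ln (f t)) a b >=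
    delta_integral (interval_ts T a b) f a b *
      ln (/ (b - a) * delta_integral (interval_ts T a b) f a b) /\
  (delta_integral (interval_ts T a b) (fun t => f t * ln (f t)) a b =
    delta_integral (interval_ts T a b) f a b *
      ln (/ (b - a) * delta_integral (interval_ts T a b) f a b) <->
   exists c, forall t, kappa (interval_ts T a b) t -> f t = c).
Proof.
  intros HT Ta Tb Hab Hrd Hpos.
  destruct (rd_continuous_antideriv T a b HT Ta Tb Hab f Hrd) as [F HF].
  destruct (rd_continuous_antideriv T a b HT Ta Tb Hab _ (rd_continuous_xlnx _ f Hrd Hpos))
    as [G HG].
  rewrite !(delta_integral_antideriv T a b HT Ta Tb Hab _ _ HF),
    (delta_integral_antideriv T a b HT Ta Tb Hab _ _ HG).
  assert (Hmass := antideriv_pos T a b HT Ta Tb Hab f F HF Hpos).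
  set (m := / (b - a) * (F b - F a)).
  assert (Hm : 0 < m) by (apply Rmult_lt_0_compat; [apply Rinv_0_lt_compat | ]; lra).
  assert (Hmass_m : F b - F a = m * (b - a)) by (unfold m; field; lra).
  (* G - (ln m + 1) F + m x has derivative f ln f - (ln m + 1) f + m >= 0, zero exactly where f = m *)
  assert (HK := antideriv_affine T a b _ _ G F 1 (- (ln m + 1)) m HG HF).
  assert (Hk : forall t, kappa (interval_ts T a b) t ->
    0 <= 1 * (f t * ln (f t)) + - (ln m + 1) * f t + m /\
    (1 * (f t * ln (f t)) + - (ln m + 1) * f t + m = 0 <-> f t = m)).
  { intros t Kt. destruct (xlnx_tangent (f t) m (Hpos t Kt) Hm) as [Hge Heq].
    split; [lra | split; [intros; apply Heq; lra | intros ->; ring]]. }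
  destruct (antideriv_nonneg T a b HT Ta Tb Hab _ _ HK (fun t Kt => proj1 (Hk t Kt)))
    as [Hle Hflat]. simpl in Hle, Hflat.
  split; [nra|]. split.
  - intros E. exists m. intros t Kt. apply (Hk t Kt), (proj1 Hflat); [nra | exact Kt].
  - intros [c Hc].
    assert (Hcm : c = m).
    { rewrite (antideriv_of_const T a b HT Ta Tb Hab f F c HF Hc) in Hmass_m. nra. }
    assert (E := proj2 Hflat (fun t Kt => proj2 (proj2 (Hk t Kt)) (eq_trans (Hc t Kt) Hcm))).
    nra.
Qed.
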